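(* Let $\theta=(\theta_1,\theta_2,\theta_3)\in\mathbb R^3\setminus\{0\}$ and let $m$ be a point on the boundary of the cube $[0,1]^3$ such that the billiard word $u=f_\theta(m)$ is well defined. Then $\delta_a(u)$ is a Sturmian word if and only if $\theta_2,\theta_3$ are linearly independent over $\mathbb Q$.
   Context: For $\theta$ and $m$ such that the line $m+\mathbb R\theta$ contains no point with more than one integer coordinate, the billiard word $f_\theta(m)\in\{a,b,c\}^{\mathbb N}$ records, in order, the successive intersections of the half line $m+\mathbb R_+\theta$ with the planes $X=n$ (letter $a$), $Y=n$ (letter $b$), $Z=n$ (letter $c$), $n\in\mathbb Z$ (this is the coding of the billiard trajectory in the unit cube, opposite faces carrying the same letter). $\delta_a$ denotes the map erasing all occurrences of the letter $a$ in a word. *)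

From Stdlib Require Import Reals QArith Qreals List ClassicalEpsilon.
Open Scope R_scope.

(** Alphabet {a,b,c}: letter a <-> planes X=n, b <-> Y=n, c <-> Z=n. *)
Inductive letter : Type := la | lb | lc.

Definition R3 := (R * R * R)%type.

Definition coord (p : R3) (l : letter) : R :=
  match p, l with
  | (x, _, _), la => x
  | (_, y, _), lb => y
  | (_, _, z), lc => z
  end.

Definition is_int (x : R) : Prop := exists n : Z, x = IZR n.

Definition hits (theta m : R3) (t : R) (l : letter) : Prop :=
  is_int (coord m l + t * coord theta l).

Definition billiard_well_defined (theta m : R3) : Prop :=
  forall (t : R) (l1 l2 : letter), l1 <> l2 ->
    hits theta m t l1 -> hits theta m t l2 -> False.

(** [u] is the billiard word of the half line m + R_+ theta (R_+ = [0,+oo)):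
    there is a strictly increasing enumeration T of all the times t >= 0
    at which the half line meets a plane X=n / Y=n / Z=n, and u k is the
    letter of the plane met at time T k. *)
Definition is_billiard_word (theta m : R3) (u : nat -> letter) : Prop :=
  exists T : nat -> R,
    (forall k, T k < T (S k)) /\
    (forall k, 0 <= T k) /\
    (forall k, hits theta m (T k) (u k)) /\
    (forall (t : R) (l : letter), 0 <= t -> hits theta m t l ->
        exists k, T k = t).

Definition inhabited_word : inhabited (nat -> letter) := inhabits (fun _ => la).

(** f_theta(m) (meaningful when the billiard word is well defined). *)
Definition billiard_word (theta m : R3) : nat -> letter :=
  epsilon inhabited_word (is_billiard_word theta m).

Fixpoint count_nona (u : nat -> letter) (j : nat) : nat :=
  match j with
  | O => O
  | S j' => count_nona u j' + (match u j' with la => 0 | _ => 1 end)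
  end%nat.

(** [w] is the infinite word delta_a(u) (obtained by erasing all the a's of u);
    no such w exists when u has only finitely many letters different from a,
    i.e. when delta_a(u) is finite. *)
Definition erase_a (u w : nat -> letter) : Prop :=
  forall k : nat, exists j : nat,
    u j <> la /\ count_nona u j = k /\ w k = u j.

Definition factor (w : nat -> letter) (i n : nat) : list letter :=
  map (fun k => w (i + k)%nat) (seq 0 n).

Definition complexity_is (w : nat -> letter) (n p : nat) : Prop :=
  exists L : list (list letter),
    NoDup L /\ length L = p /\
    (forall x, In x L <-> exists i, x = factor w i n).

Definition sturmian (w : nat -> letter) : Prop :=
  forall n : nat, complexity_is w n (S n).

Definition delta_a_sturmian (u : nat -> letter) : Prop :=
  exists w, erase_a u w /\ sturmian w.

Definition on_cube_boundary (m : R3) : Prop :=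
  (forall l, 0 <= coord m l <= 1) /\
  (exists l, coord m l = 0 \/ coord m l = 1).

Definition Q_lin_indep (x y : R) : Prop :=
  forall p q : Q, Q2R p * x + Q2R q * y = 0 -> (p == 0)%Q /\ (q == 0)%Q.

From Stdlib Require Import Reals QArith Qreals List ClassicalEpsilon Lra Lia ZArith.
Open Scope R_scope.

(* Erasing [a] from the billiard word leaves the coding of the trajectory by the planes
   Y = n and Z = n only. Orient Y and Z so that they increase along the line; then
   |theta_3| Y - |theta_2| Z is constant, and at the k-th b- or c-hit (counting from 0)
   k = ceil Y + ceil Z + const. Solving these two relations shows that, for a suitable
   rho, the k-th letter of delta_a(u) is c or b according as the integer part of
   rho + k alpha does or does not change when alpha is added, where
   alpha = |theta_2| / (|theta_2| + |theta_3|): delta_a(u) is a rotation word.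
   If theta_2, theta_3 are Q-independent, alpha is irrational, and the factor of length n
   read from a point y depends only on how many of the n points frac(-j alpha), 1 <= j <= n,
   lie below frac(y); density of the orbit makes all n + 1 counts occur. Otherwise
   theta_2 theta_3 = 0 and delta_a(u) is constant, or alpha is rational and delta_a(u) is
   periodic; periodic words have bounded complexity. *)

Lemma Int_part_unique x n : IZR n <= x < IZR n + 1 -> Int_part x = n.
Proof. intros Hx. symmetry. apply Int_part_spec. lra. Qed.

Lemma Int_part_bounds x : IZR (Int_part x) <= x < IZR (Int_part x) + 1.
Proof. destruct (base_Int_part x). lra. Qed.

Lemma Int_part_IZR n : Int_part (IZR n) = n.
Proof. apply Int_part_unique. lra. Qed.

Lemma Int_part_addZ x n : Int_part (x + IZR n) = (Int_part x + n)%Z.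
Proof. apply Int_part_unique. rewrite plus_IZR. pose proof (Int_part_bounds x). lra. Qed.

Lemma Int_part_le x y : x <= y -> (Int_part x <= Int_part y)%Z.
Proof.
  intros Hxy. pose proof (Int_part_bounds x). pose proof (Int_part_bounds y).
  assert (Int_part x < Int_part y + 1)%Z by (apply lt_IZR; rewrite plus_IZR; lra).
  lia.
Qed.

Lemma frac_part_range x : 0 <= frac_part x < 1.
Proof. destruct (base_fp x). lra. Qed.

Lemma frac_part_addZ x n : frac_part (x + IZR n) = frac_part x.
Proof. unfold frac_part. rewrite Int_part_addZ, plus_IZR. ring. Qed.

Lemma frac_part_unique x n : IZR n <= x < IZR n + 1 -> frac_part x = x - IZR n.
Proof. intros Hx. unfold frac_part. rewrite (Int_part_unique x n Hx). reflexivity. Qed.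

Lemma frac_part_pos x : ~ is_int x -> 0 < frac_part x.
Proof.
  intros Hx. pose proof (frac_part_range x).
  destruct (Req_dec (frac_part x) 0) as [E|]; [|lra].
  exfalso. apply Hx. exists (Int_part x). unfold frac_part in E. lra.
Qed.

Lemma is_int_opp x : is_int (- x) <-> is_int x.
Proof. split; intros [n Hn]; exists (- n)%Z; rewrite opp_IZR; lra. Qed.

Definition ceil (x : R) : Z := (- Int_part (- x))%Z.

Lemma ceil_bounds x : IZR (ceil x) - 1 < x <= IZR (ceil x).
Proof. unfold ceil. rewrite opp_IZR. pose proof (Int_part_bounds (- x)). lra. Qed.

Lemma ceil_unique x n : IZR n - 1 < x <= IZR n -> ceil x = n.
Proof.
  intros Hx. unfold ceil. rewrite (Int_part_unique (- x) (- n)); [lia|].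
  rewrite opp_IZR. lra.
Qed.

Lemma ceil_IZR n : ceil (IZR n) = n.
Proof. apply ceil_unique. lra. Qed.

Lemma ceil_not_int x : ~ is_int x -> ceil x = (Int_part x + 1)%Z.
Proof.
  intros Hx. pose proof (frac_part_pos x Hx). pose proof (frac_part_range x).
  apply ceil_unique. rewrite plus_IZR. unfold frac_part in *. lra.
Qed.

Lemma ceil_no_int_between x y :
  x <= y -> (forall n, ~ (x <= IZR n < y)) -> ceil y = ceil x.
Proof.
  intros Hxy Hno. pose proof (ceil_bounds x).
  apply ceil_unique. split; [lra|].
  destruct (Rle_dec y (IZR (ceil x))) as [|Hlt]; [assumption|].
  exfalso. apply (Hno (ceil x)). lra.
Qed.

Lemma ceil_one_int_between n y :
  IZR n < y -> (forall k, IZR n <= IZR k < y -> k = n) -> ceil y = (n + 1)%Z.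
Proof.
  intros Hny Hone. apply ceil_unique. rewrite plus_IZR. split; [lra|].
  destruct (Rle_dec y (IZR n + 1)) as [|Hlt]; [assumption|].
  assert (E : (n + 1)%Z = n) by (apply Hone; rewrite plus_IZR; lra). lia.
Qed.

Lemma ceil_add_int_not_int x y :
  is_int x -> ~ is_int y -> (ceil x + ceil y - 1 = Int_part x + Int_part y)%Z.
Proof. intros [n ->] Hy. rewrite ceil_IZR, Int_part_IZR, ceil_not_int by exact Hy. lia. Qed.

Lemma INR_Z_to_nat z : (0 <= z)%Z -> INR (Z.to_nat z) = IZR z.
Proof. intros Hz. now rewrite INR_IZR_INZ, Z2Nat.id. Qed.

Lemma nat_ceil_exists z : 0 <= z -> exists K : nat, INR K - 1 < z <= INR K.
Proof.
  intros Hz. pose proof (ceil_bounds z).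
  assert (Hc : (0 <= ceil z)%Z) by (apply le_IZR; lra).
  exists (Z.to_nat (ceil z)). now rewrite INR_Z_to_nat.
Qed.

Lemma nat_floor_succ_exists z : 0 <= z -> exists K : nat, INR K - 1 <= z < INR K.
Proof.
  intros Hz. destruct (archimed z) as [Hup1 Hup2].
  assert (Hc : (0 <= up z)%Z) by (apply le_IZR; lra).
  exists (Z.to_nat (up z)). rewrite INR_Z_to_nat by exact Hc. lra.
Qed.

Lemma ratio_range b g : 0 < b -> 0 < g -> 0 < b / (b + g) < 1.
Proof.
  intros Hb Hg. split; [apply Rdiv_lt_0_compat; lra|].
  apply (Rmult_lt_reg_r (b + g)); [lra|]. unfold Rdiv. rewrite Rmult_assoc, Rinv_l by lra. lra.
Qed.

Lemma list_sum_map_le {A : Type} (f g : A -> nat) (l : list A) :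
  (forall j, In j l -> (f j <= g j)%nat) ->
  (list_sum (map f l) <= list_sum (map g l))%nat.
Proof.
  induction l as [|a l IH]; simpl; intros H; [lia|].
  pose proof (H a (or_introl eq_refl)). pose proof (IH (fun j Hj => H j (or_intror Hj))). lia.
Qed.

Lemma list_sum_map_eq_le {A : Type} (f g : A -> nat) (l : list A) :
  (forall j, In j l -> (f j <= g j)%nat) ->
  list_sum (map f l) = list_sum (map g l) -> forall j, In j l -> f j = g j.
Proof.
  induction l as [|a l IH]; simpl; intros H E j Hj; [contradiction|].
  assert (Hl : forall j, In j l -> (f j <= g j)%nat) by auto.
  pose proof (H a (or_introl eq_refl)). pose proof (list_sum_map_le f g l Hl).
  destruct Hj as [<-|Hj]; [lia|]. apply IH; auto. lia.
Qed.

Lemma list_sum_map_lt {A : Type} (f g : A -> nat) (l : list A) k :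
  (forall j, In j l -> (f j <= g j)%nat) -> In k l -> (f k < g k)%nat ->
  (list_sum (map f l) < list_sum (map g l))%nat.
Proof.
  intros H Hk Hlt. pose proof (list_sum_map_le f g l H).
  destruct (Nat.eq_dec (list_sum (map f l)) (list_sum (map g l))) as [E|]; [|lia].
  pose proof (list_sum_map_eq_le f g l H E k Hk). lia.
Qed.

Lemma list_sum_map_le_length {A : Type} (f : A -> nat) (l : list A) :
  (forall j, (f j <= 1)%nat) -> (list_sum (map f l) <= length l)%nat.
Proof. intros H. induction l as [|a l IH]; simpl; [lia|]. pose proof (H a). lia. Qed.

Lemma pigeonhole (N : nat) (f : nat -> nat) :
  (forall k, (k <= N)%nat -> (f k < N)%nat) ->
  exists k1 k2, (k1 < k2 <= N)%nat /\ f k1 = f k2.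
Proof.
  intros Hf. apply NNPP. intros Hinj.
  assert (Hnodup : NoDup (map f (seq 0 (S N)))).
  { apply NoDup_map_NoDup_ForallPairs; [|apply seq_NoDup].
    intros x y Hx Hy Exy. apply in_seq in Hx, Hy.
    destruct (lt_eq_lt_dec x y) as [[Hlt|Heq]|Hgt]; auto; exfalso; apply Hinj;
      [exists x, y | exists y, x]; split; auto; lia. }
  assert (Hincl : incl (map f (seq 0 (S N))) (seq 0 N)).
  { intros z Hz. apply in_map_iff in Hz as [x [<- Hx]]. apply in_seq in Hx.
    apply in_seq. pose proof (Hf x ltac:(lia)). lia. }
  pose proof (NoDup_incl_length Hnodup Hincl). rewrite length_map, !length_seq in H. lia.
Qed.

Lemma pigeonhole_close_pair (x : nat -> R) (eps : R) :
  0 < eps -> (forall k, 0 <= x k < 1) ->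
  exists k1 k2, (k1 < k2)%nat /\ Rabs (x k2 - x k1) < eps.
Proof.
  intros He Hx. destruct (nat_floor_succ_exists (/ eps)) as [N [_ HN]].
  { left. now apply Rinv_0_lt_compat. }
  assert (HNeps : 1 < INR N * eps).
  { apply (Rmult_lt_compat_r eps) in HN; [|exact He]. now rewrite Rinv_l in HN by lra. }
  assert (HN0 : 0 < INR N) by nra.
  set (bin := fun k => Z.to_nat (Int_part (INR N * x k))).
  assert (Hbin : forall k, (0 <= Int_part (INR N * x k) < Z.of_nat N)%Z).
  { intros k. pose proof (Hx k). pose proof (Int_part_bounds (INR N * x k)).
    assert (Hnonneg : IZR 0 <= INR N * x k) by nra.
    apply Int_part_le in Hnonneg. rewrite Int_part_IZR in Hnonneg.
    split; [exact Hnonneg | apply lt_IZR; rewrite <- INR_IZR_INZ; nra]. }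
  destruct (pigeonhole N bin) as [k1 [k2 [Hk Hb]]].
  { intros k _. unfold bin. pose proof (Hbin k). lia. }
  exists k1, k2. split; [lia|].
  unfold bin in Hb. pose proof (Hbin k1). pose proof (Hbin k2).
  assert (Heq : Int_part (INR N * x k1) = Int_part (INR N * x k2)) by lia.
  pose proof (Int_part_bounds (INR N * x k1)) as B1.
  pose proof (Int_part_bounds (INR N * x k2)) as B2. rewrite Heq in B1.
  apply Rabs_def1; nra.
Qed.

Lemma list_pos_lower_bound (l : list R) :
  (forall x, In x l -> 0 < x) -> exists e, 0 < e /\ forall x, In x l -> e <= x.
Proof.
  induction l as [|a l IH]; intros Hpos.
  - exists 1. split; [lra | intros x []].
  - destruct IH as [e [He Hle]]; [intros x Hx; apply Hpos; now right|].
    assert (Ha : 0 < a) by (apply Hpos; now left).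
    exists (Rmin a e). split; [now apply Rmin_glb_lt|].
    intros x [<-|Hx]; [apply Rmin_l|]. eapply Rle_trans; [apply Rmin_r | now apply Hle].
Qed.

Lemma grid_pos_lower_bound (f : nat -> nat -> R) (N : nat) :
  (forall j k, (j <= N)%nat -> (k <= N)%nat -> 0 < f j k) ->
  exists e, 0 < e /\ forall j k, (j <= N)%nat -> (k <= N)%nat -> e <= f j k.
Proof.
  intros Hpos.
  set (values := flat_map (fun j => map (f j) (seq 0 (S N))) (seq 0 (S N))).
  assert (Hin : forall x, In x values <-> exists j k, (j <= N)%nat /\ (k <= N)%nat /\ x = f j k).
  { intros x. unfold values. rewrite in_flat_map. split.
    - intros [j [Hj Hx]]. apply in_map_iff in Hx as [k [<- Hk]]. apply in_seq in Hj, Hk.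
      exists j, k. repeat split; lia.
    - intros [j [k [Hj [Hk ->]]]]. exists j. split; [apply in_seq; lia|].
      apply in_map. apply in_seq. lia. }
  destruct (list_pos_lower_bound values) as [e [He Hle]].
  { intros x Hx. apply Hin in Hx as [j [k [Hj [Hk ->]]]]. auto. }
  exists e. split; [exact He|]. intros j k Hj Hk. apply Hle, Hin. eauto.
Qed.

Lemma letter_eq_dec (x y : letter) : {x = y} + {x <> y}.
Proof. decide equality. Defined.

Lemma complexity_is_of_classes (w : nat -> letter) (n p : nat) (r s : nat -> nat) :
  (forall i i', factor w i n = factor w i' n <-> r i = r i') ->
  (forall i, (r i < p)%nat) ->
  (forall v v', (v < p)%nat -> (v' < p)%nat -> r (s v) = r (s v') -> v = v') ->
  complexity_is w n p.
Proof.
  intros Hr Hlt Hs.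
  assert (Hinj : ForallPairs (fun v v' => r (s v) = r (s v') -> v = v') (seq 0 p)).
  { intros v v' Hv Hv'. apply in_seq in Hv, Hv'. apply Hs; lia. }
  assert (Hcover : incl (seq 0 p) (map (fun v => r (s v)) (seq 0 p))).
  { apply NoDup_length_incl.
    - apply NoDup_map_NoDup_ForallPairs; [exact Hinj | apply seq_NoDup].
    - rewrite length_map. lia.
    - intros x Hx. apply in_map_iff in Hx as [v [<- _]]. apply in_seq. split; [lia | apply Hlt]. }
  exists (map (fun v => factor w (s v) n) (seq 0 p)). split; [|split].
  - apply NoDup_map_NoDup_ForallPairs; [|apply seq_NoDup].
    intros v v' Hv Hv' E. apply Hinj; auto. now apply Hr.
  - now rewrite length_map, length_seq.
  - intros x. rewrite in_map_iff. split.
    + intros [v [<- _]]. eauto.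
    + intros [i ->].
      assert (Hi : In (r i) (seq 0 p)) by (apply in_seq; split; [lia | apply Hlt]).
      apply Hcover, in_map_iff in Hi as [v [Hv Hin]]. exists v. split; [now apply Hr | exact Hin].
Qed.

Lemma periodic_not_sturmian (w : nat -> letter) (J : nat) :
  (1 <= J)%nat -> (forall k, w (k + J)%nat = w k) -> ~ sturmian w.
Proof.
  intros HJ Hper Hsturm. destruct (Hsturm J) as [L [Hnodup [Hlen HL]]].
  assert (Hper' : forall q r, w (r + q * J)%nat = w r).
  { induction q as [|q IH]; intros r; [f_equal; lia|].
    replace (r + S q * J)%nat with (r + q * J + J)%nat by lia. now rewrite Hper. }
  assert (Hincl : incl L (map (fun i => factor w i J) (seq 0 J))).
  { intros x Hx. apply HL in Hx as [i ->]. apply in_map_iff. exists (i mod J). split.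
    - unfold factor. apply map_ext. intros k.
      rewrite <- (Hper' (i / J)%nat (i mod J + k)%nat). f_equal.
      pose proof (Nat.div_mod_eq i J). lia.
    - apply in_seq. pose proof (Nat.mod_upper_bound i J ltac:(lia)). lia. }
  pose proof (NoDup_incl_length Hnodup Hincl). rewrite Hlen, length_map, length_seq in H. lia.
Qed.

Fixpoint count_letter (l : letter) (u : nat -> letter) (j : nat) : nat :=
  match j with
  | O => O
  | S j => (count_letter l u j + if letter_eq_dec (u j) l then 1 else 0)%nat
  end.

Lemma count_nona_split u j : count_nona u j = (count_letter lb u j + count_letter lc u j)%nat.
Proof. induction j as [|j IH]; simpl; [reflexivity|]. rewrite IH. destruct (u j); simpl; lia. Qed.

Lemma count_nona_attained u N k :
  (k < count_nona u N)%nat -> exists j, u j <> la /\ count_nona u j = k.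
Proof.
  induction N as [|N IH]; simpl; intros Hk; [lia|].
  destruct (Nat.lt_ge_cases k (count_nona u N)) as [Hlt|Hge]; [now apply IH|].
  exists N. destruct (u N); simpl in Hk; split; easy || lia.
Qed.

Lemma erase_a_of_unbounded u :
  (forall K, exists j, (K <= count_nona u j)%nat) -> exists w, erase_a u w.
Proof.
  intros Hunb.
  assert (Hex : forall k, exists j, u j <> la /\ count_nona u j = k).
  { intros k. destruct (Hunb (S k)) as [N HN]. apply (count_nona_attained u N). lia. }
  destruct (choice _ Hex) as [pos Hpos].
  exists (fun k => u (pos k)). intros k. exists (pos k). now destruct (Hpos k).
Qed.

Lemma erase_a_not_a u w k : erase_a u w -> w k <> la.
Proof. intros Hw. destruct (Hw k) as [j [Hj [_ ->]]]. exact Hj. Qed.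

Definition irrational (x : R) : Prop := forall p q : Z, q <> 0%Z -> IZR q * x <> IZR p.

Lemma Q2R_inject_Z z : Q2R (inject_Z z) = IZR z.
Proof. unfold Q2R. simpl. rewrite Rinv_1. ring. Qed.

Lemma Q_lin_indep_nonzero x y : Q_lin_indep x y -> x <> 0 /\ y <> 0.
Proof.
  intros H. split; intros E.
  - destruct (H 1%Q 0%Q) as [H1 _]; [rewrite E; lra | discriminate H1].
  - destruct (H 0%Q 1%Q) as [_ H1]; [rewrite E; lra | discriminate H1].
Qed.

Lemma Q_lin_indep_opp_l x y : Q_lin_indep x y -> Q_lin_indep (- x) y.
Proof.
  intros H p q E. destruct (H (- p)%Q q) as [Hp Hq]; [rewrite Q2R_opp; lra|].
  split; [|exact Hq]. destruct p. unfold Qeq, Qopp in *. simpl in *. lia.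
Qed.

Lemma Q_lin_indep_opp_r x y : Q_lin_indep x y -> Q_lin_indep x (- y).
Proof.
  intros H p q E. destruct (H p (- q)%Q) as [Hp Hq]; [rewrite Q2R_opp; lra|].
  split; [exact Hp|]. destruct q. unfold Qeq, Qopp in *. simpl in *. lia.
Qed.

Lemma Q_lin_indep_Rabs x y : Q_lin_indep (Rabs x) (Rabs y) <-> Q_lin_indep x y.
Proof.
  assert (Hl : forall a b, Q_lin_indep (- a) b <-> Q_lin_indep a b).
  { intros a b. split; [|apply Q_lin_indep_opp_l]. intros H. rewrite <- (Ropp_involutive a).
    now apply Q_lin_indep_opp_l. }
  assert (Hr : forall a b, Q_lin_indep a (- b) <-> Q_lin_indep a b).
  { intros a b. split; [|apply Q_lin_indep_opp_r]. intros H. rewrite <- (Ropp_involutive b).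
    now apply Q_lin_indep_opp_r. }
  destruct (Rle_or_lt 0 x) as [Hx|Hx];
    [rewrite (Rabs_pos_eq x Hx) | rewrite (Rabs_left x Hx), Hl];
  (destruct (Rle_or_lt 0 y) as [Hy|Hy];
    [rewrite (Rabs_pos_eq y Hy) | rewrite (Rabs_left y Hy), Hr]); reflexivity.
Qed.

Lemma Q_lin_indep_iff_irrational b g :
  0 < b -> 0 < g -> Q_lin_indep b g <-> irrational (b / (b + g)).
Proof.
  intros Hb Hg. split.
  - intros H p q Hq E.
    assert (E' : IZR (q - p) * b + IZR (- p) * g = 0).
    { rewrite minus_IZR, opp_IZR. apply (Rmult_eq_compat_r (b + g)) in E.
      field_simplify in E; lra. }
    rewrite <- (Q2R_inject_Z (q - p)), <- (Q2R_inject_Z (- p)) in E'.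
    apply H in E' as [Hqp Hp].
    unfold Qeq in Hqp, Hp. simpl in Hqp, Hp. lia.
  - intros H [a d] [a' d'] E. unfold Q2R in E. simpl in E. unfold Qeq. simpl.
    assert (Hd : 0 < IZR (Z.pos d)) by (apply IZR_lt; lia).
    assert (Hd' : 0 < IZR (Z.pos d')) by (apply IZR_lt; lia).
    (* Clearing denominators gives [A b + B g = 0]; if [A <> B] then
       [(A - B) * (b / (b + g)) = - B]. *)
    set (A := (a * Z.pos d')%Z). set (B := (a' * Z.pos d)%Z).
    assert (E' : IZR A * b + IZR B * g = 0).
    { unfold A, B. rewrite !mult_IZR.
      apply (Rmult_eq_compat_r (IZR (Z.pos d) * IZR (Z.pos d'))) in E.
      field_simplify in E; lra. }
    assert (HAB : A = B).
    { destruct (Z.eq_dec A B) as [|Hne]; [assumption|]. exfalso.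
      apply (H (- B)%Z (A - B)%Z); [lia|]. rewrite minus_IZR, opp_IZR.
      apply (Rmult_eq_reg_r (b + g)); [|lra].
      replace ((IZR A - IZR B) * (b / (b + g)) * (b + g)) with ((IZR A - IZR B) * b)
        by (field; lra).
      lra. }
    rewrite HAB in E'. assert (HB : IZR B = 0) by nra. apply eq_IZR in HB.
    unfold A, B in *. split; lia.
Qed.

(** * Rotation words *)

Lemma frac_part_progression (x0 d a eps : R) :
  0 <= a -> a + eps <= 1 -> 0 < Rabs d < eps ->
  exists K : nat, a <= frac_part (x0 + INR K * d) < a + eps.
Proof.
  intros Ha Hae Hd. pose proof (Int_part_bounds x0).
  destruct (Rle_dec 0 d) as [Hpos|Hneg].
  - rewrite Rabs_pos_eq in Hd by exact Hpos.
    set (n := (Int_part x0 + 1)%Z).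
    destruct (nat_ceil_exists ((a + IZR n - x0) / d)) as [K HK].
    { unfold Rdiv. apply Rmult_le_pos; [unfold n; rewrite plus_IZR; lra|].
      apply Rlt_le, Rinv_0_lt_compat. lra. }
    assert (HKd : a + IZR n - x0 <= INR K * d < a + IZR n - x0 + d).
    { replace (a + IZR n - x0) with ((a + IZR n - x0) / d * d) by (field; lra). nra. }
    exists K. rewrite (frac_part_unique _ n); lra.
  - rewrite Rabs_left in Hd by lra.
    set (n := (Int_part x0 - 1)%Z).
    assert (Hn : a + eps + IZR n <= x0) by (unfold n; rewrite minus_IZR; lra).
    destruct (nat_floor_succ_exists ((x0 - (a + eps + IZR n)) / - d)) as [K HK].
    { unfold Rdiv. apply Rmult_le_pos; [lra|]. apply Rlt_le, Rinv_0_lt_compat. lra. }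
    assert (HKd : x0 - (a + eps + IZR n) < INR K * - d <= x0 - (a + eps + IZR n) - d).
    { replace (x0 - (a + eps + IZR n)) with ((x0 - (a + eps + IZR n)) / - d * - d)
        by (field; lra). nra. }
    exists K. rewrite (frac_part_unique _ n); lra.
Qed.

Section Rotation.

Variable alpha : R.
Hypothesis alpha_range : 0 < alpha < 1.

Definition rotation_letter (y : R) : letter :=
  if Z.eq_dec (Int_part (y + alpha)) (Int_part y) then lc else lb.

Definition rotation_factor (n : nat) (y : R) : list letter :=
  map (fun k => rotation_letter (y + INR k * alpha)) (seq 0 n).

Definition jump (j : nat) (y : R) : Z := (Int_part (y + INR j * alpha) - Int_part y)%Z.

Definition carry (j : nat) (y : R) : nat :=
  if Rle_dec 1 (frac_part y + frac_part (INR j * alpha)) then 1%nat else 0%nat.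

Definition rank (n : nat) (y : R) : nat := list_sum (map (fun j => carry j y) (seq 1 n)).

Lemma jump_carry j y : jump j y = (Int_part (INR j * alpha) + Z.of_nat (carry j y))%Z.
Proof.
  unfold jump, carry. destruct Rle_dec.
  - rewrite plus_Int_part1 by lra. simpl. lia.
  - rewrite plus_Int_part2 by lra. simpl. lia.
Qed.

Lemma jump_succ j y : jump (S j) y = jump j y \/ jump (S j) y = (jump j y + 1)%Z.
Proof.
  unfold jump. rewrite S_INR.
  replace (y + (INR j + 1) * alpha) with (y + INR j * alpha + alpha) by ring.
  set (z := y + INR j * alpha). pose proof (Int_part_bounds z).
  destruct (Rlt_dec (z + alpha) (IZR (Int_part z) + 1)).
  - left. rewrite (Int_part_unique (z + alpha) (Int_part z)) by lra. lia.
  - right. rewrite (Int_part_unique (z + alpha) (Int_part z + 1)) by (rewrite plus_IZR; lra). lia.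
Qed.

Lemma rotation_letter_jump k y :
  rotation_letter (y + INR k * alpha) = if Z.eq_dec (jump (S k) y) (jump k y) then lc else lb.
Proof.
  unfold rotation_letter, jump. rewrite S_INR.
  replace (y + (INR k + 1) * alpha) with (y + INR k * alpha + alpha) by ring.
  repeat destruct Z.eq_dec; first [reflexivity | lia].
Qed.

Lemma rotation_factor_eq_iff_jump n y y' :
  rotation_factor n y = rotation_factor n y' <->
  forall j, (j <= n)%nat -> jump j y = jump j y'.
Proof.
  unfold rotation_factor. rewrite map_ext_in_iff. split.
  - intros Hletters j. induction j as [|j IH]; intros Hj.
    + unfold jump. simpl. rewrite Rmult_0_l, !Rplus_0_r. lia.
    + assert (Hl := Hletters j (proj2 (in_seq n 0 j) ltac:(lia))). cbv beta in Hl.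
      rewrite !rotation_letter_jump, IH in Hl by lia.
      destruct (jump_succ j y), (jump_succ j y'); repeat destruct Z.eq_dec;
        first [discriminate | lia].
  - intros Hjumps k Hk. apply in_seq in Hk.
    rewrite !rotation_letter_jump, (Hjumps k), (Hjumps (S k)) by lia. reflexivity.
Qed.

Lemma rotation_factor_eq_iff_carry n y y' :
  rotation_factor n y = rotation_factor n y' <->
  forall j, In j (seq 1 n) -> carry j y = carry j y'.
Proof.
  rewrite rotation_factor_eq_iff_jump. split.
  - intros H j Hj. apply in_seq in Hj. specialize (H j ltac:(lia)). rewrite !jump_carry in H. lia.
  - intros H [|j] Hj; [unfold jump; simpl; rewrite Rmult_0_l, !Rplus_0_r; lia|].
    rewrite !jump_carry, (H (S j)) by (apply in_seq; lia). reflexivity.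
Qed.

Lemma carry_le j y y' : frac_part y <= frac_part y' -> (carry j y <= carry j y')%nat.
Proof. intros H. unfold carry. repeat destruct Rle_dec; first [lia | lra]. Qed.

(* The carries are monotone in [frac_part y], so two carry vectors agree iff their sums do. *)
Lemma rotation_factor_eq_iff_rank n y y' :
  rotation_factor n y = rotation_factor n y' <-> rank n y = rank n y'.
Proof.
  rewrite rotation_factor_eq_iff_carry. unfold rank. split.
  - intros H. f_equal. now apply map_ext_in.
  - intros E. destruct (Rle_dec (frac_part y) (frac_part y')).
    + apply list_sum_map_eq_le; [intros j _; now apply carry_le | exact E].
    + intros j Hj. symmetry. revert j Hj.
      apply list_sum_map_eq_le; [intros j _; apply carry_le; lra | now symmetry].
Qed.

Lemma rank_le n y : (rank n y <= n)%nat.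
Proof.
  unfold rank. rewrite <- (length_seq n 1) at 2. apply list_sum_map_le_length.
  intros j. unfold carry. destruct Rle_dec; lia.
Qed.

Hypothesis alpha_irrational : irrational alpha.

Definition threshold (j : nat) : R := frac_part (- INR j * alpha).

Lemma threshold_range j : 0 <= threshold j < 1.
Proof. apply frac_part_range. Qed.

Lemma frac_multiple_pos j : (1 <= j)%nat -> 0 < frac_part (INR j * alpha).
Proof.
  intros Hj. apply frac_part_pos. intros [n Hn].
  apply (alpha_irrational n (Z.of_nat j)); [lia|]. now rewrite <- INR_IZR_INZ.
Qed.

Lemma threshold_pos j : (1 <= j)%nat -> threshold j = 1 - frac_part (INR j * alpha).
Proof.
  intros Hj. pose proof (frac_multiple_pos j Hj). pose proof (frac_part_range (INR j * alpha)).
  unfold threshold.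
  replace (- INR j * alpha)
    with (1 - frac_part (INR j * alpha) + IZR (- Int_part (INR j * alpha) - 1))
    by (rewrite minus_IZR, opp_IZR; unfold frac_part; ring).
  rewrite frac_part_addZ, (frac_part_unique _ 0) by lra. ring.
Qed.

Lemma threshold_0 : threshold 0 = 0.
Proof. unfold threshold. simpl. replace (- 0 * alpha) with 0 by ring. apply fp_R0. Qed.

Lemma threshold_inj j k : threshold j = threshold k -> j = k.
Proof.
  intros E. destruct (Nat.eq_dec j k) as [|Hne]; [assumption|]. exfalso.
  unfold threshold, frac_part in E.
  apply (alpha_irrational (Int_part (- INR j * alpha) - Int_part (- INR k * alpha))%Z
                          (Z.of_nat k - Z.of_nat j)%Z); [lia|].
  rewrite !minus_IZR, <- !INR_IZR_INZ. lra.
Qed.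

Lemma carry_threshold j y :
  (1 <= j)%nat -> carry j y = (if Rle_dec (threshold j) (frac_part y) then 1 else 0)%nat.
Proof.
  intros Hj. rewrite threshold_pos by exact Hj. unfold carry.
  repeat destruct Rle_dec; lra || reflexivity.
Qed.

Lemma rank_lt n y y' k :
  (1 <= k <= n)%nat -> frac_part y < threshold k <= frac_part y' -> (rank n y < rank n y')%nat.
Proof.
  intros Hk Hy. unfold rank. apply (list_sum_map_lt _ _ _ k).
  - intros j _. apply carry_le. lra.
  - apply in_seq. lia.
  - rewrite !carry_threshold by lia. repeat destruct Rle_dec; lra || lia.
Qed.

Lemma dirichlet_approximation eps :
  0 < eps -> exists (q : nat) (n : Z), (1 <= q)%nat /\ 0 < Rabs (INR q * alpha - IZR n) < eps.
Proof.
  intros He.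
  destruct (pigeonhole_close_pair (fun k => frac_part (INR k * alpha)) eps He) as [k1 [k2 [Hk Hclose]]];
    [intros k; apply frac_part_range |].
  exists (k2 - k1)%nat, (Int_part (INR k2 * alpha) - Int_part (INR k1 * alpha))%Z.
  assert (E : INR (k2 - k1) * alpha - IZR (Int_part (INR k2 * alpha) - Int_part (INR k1 * alpha))
              = frac_part (INR k2 * alpha) - frac_part (INR k1 * alpha)).
  { rewrite minus_INR, minus_IZR by lia. unfold frac_part. ring. }
  split; [lia|]. rewrite E. split; [|exact Hclose].
  apply Rabs_pos_lt. rewrite <- E. intros E0.
  apply (alpha_irrational (Int_part (INR k2 * alpha) - Int_part (INR k1 * alpha))%Z
                          (Z.of_nat (k2 - k1))); [lia|].
  rewrite <- INR_IZR_INZ. lra.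
Qed.

Lemma rotation_orbit_dense rho a eps :
  0 <= a -> 0 < eps -> a + eps <= 1 -> exists i, a <= frac_part (rho + INR i * alpha) < a + eps.
Proof.
  intros Ha He Hae. destruct (dirichlet_approximation eps He) as [q [n [Hq Hd]]].
  destruct (frac_part_progression rho (INR q * alpha - IZR n) a eps Ha Hae Hd) as [K HK].
  exists (K * q)%nat.
  replace (rho + INR (K * q) * alpha)
    with (rho + INR K * (INR q * alpha - IZR n) + IZR (Z.of_nat K * n))
    by (rewrite mult_IZR, <- INR_IZR_INZ, mult_INR; ring).
  now rewrite frac_part_addZ.
Qed.

(* For each [j <= n] pick a point of the orbit just above [threshold j]; the ranks of
   these n + 1 points are pairwise distinct. *)
Theorem rotation_sturmian rho (w : nat -> letter) :
  (forall k, w k = rotation_letter (rho + INR k * alpha)) -> sturmian w.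
Proof.
  intros Hw n. set (y := fun i => rho + INR i * alpha).
  assert (Hfactor : forall i, factor w i n = rotation_factor n (y i)).
  { intros i. unfold factor, rotation_factor. apply map_ext. intros k.
    rewrite Hw, plus_INR. f_equal. unfold y. ring. }
  set (gap := fun j k => Rmin (1 - threshold j)
                 (if Rlt_dec (threshold j) (threshold k) then threshold k - threshold j else 1)).
  destruct (grid_pos_lower_bound gap n) as [e [He Hgap]].
  { intros j k _ _. pose proof (threshold_range j).
    apply Rmin_glb_lt; [lra | destruct Rlt_dec; lra]. }
  assert (Hpoint : forall j, exists i,
            (j <= n)%nat -> threshold j <= frac_part (y i) < threshold j + e).
  { intros j. destruct (le_dec j n) as [Hj|Hj]; [|exists 0%nat; intros; lia].
    pose proof (Rle_trans _ _ _ (Hgap j j Hj Hj) (Rmin_l _ _)). pose proof (threshold_range j).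
    destruct (rotation_orbit_dense rho (threshold j) e) as [i Hi]; [lra .. |].
    exists i. intros _. exact Hi. }
  destruct (choice _ Hpoint) as [pick Hpick].
  assert (Hrank : forall j k, (j <= n)%nat -> (k <= n)%nat -> threshold j < threshold k ->
            (rank n (y (pick j)) < rank n (y (pick k)))%nat).
  { intros j k Hj Hk Hlt.
    assert (Hk1 : (1 <= k)%nat).
    { destruct k; [|lia]. rewrite threshold_0 in Hlt. pose proof (threshold_range j). lra. }
    pose proof (Rle_trans _ _ _ (Hgap j k Hj Hk) (Rmin_r _ _)) as Hg.
    destruct Rlt_dec; [|lra].
    pose proof (Hpick j Hj). pose proof (Hpick k Hk).
    apply (rank_lt n _ _ k); [lia | lra]. }
  apply (complexity_is_of_classes w n (S n) (fun i => rank n (y i)) pick).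
  - intros i i'. rewrite !Hfactor. apply rotation_factor_eq_iff_rank.
  - intros i. pose proof (rank_le n (y i)). lia.
  - intros v v' Hv Hv' E. destruct (Nat.eq_dec v v') as [|Hne]; [assumption|]. exfalso.
    destruct (Rtotal_order (threshold v) (threshold v')) as [Hlt|[Heq|Hgt]].
    + pose proof (Hrank v v' ltac:(lia) ltac:(lia) Hlt). lia.
    + exact (Hne (threshold_inj v v' Heq)).
    + pose proof (Hrank v' v ltac:(lia) ltac:(lia) Hgt). lia.
Qed.

End Rotation.

Lemma rotation_letter_addZ alpha y n : rotation_letter alpha (y + IZR n) = rotation_letter alpha y.
Proof.
  unfold rotation_letter. replace (y + IZR n + alpha) with (y + alpha + IZR n) by ring.
  rewrite !Int_part_addZ. repeat destruct Z.eq_dec; first [reflexivity | lia].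
Qed.

Lemma rotation_word_periodic alpha rho (w : nat -> letter) :
  ~ irrational alpha -> (forall k, w k = rotation_letter alpha (rho + INR k * alpha)) ->
  exists J, (1 <= J)%nat /\ forall k, w (k + J)%nat = w k.
Proof.
  intros Hrat Hw.
  assert (Hrel : exists (J : nat) (n : Z), (1 <= J)%nat /\ INR J * alpha = IZR n).
  { apply NNPP. intros Hnone. apply Hrat. intros p q Hq E.
    destruct (Z_lt_le_dec 0 q).
    - apply Hnone. exists (Z.to_nat q), p. rewrite INR_Z_to_nat by lia. split; [lia | exact E].
    - apply Hnone. exists (Z.to_nat (- q)), (- p)%Z. rewrite INR_Z_to_nat by lia.
      rewrite !opp_IZR. split; [lia | lra]. }
  destruct Hrel as [J [n [HJ E]]]. exists J. split; [exact HJ|]. intros k.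
  rewrite !Hw, plus_INR.
  replace (rho + (INR k + INR J) * alpha) with (rho + INR k * alpha + IZR n)
    by (rewrite <- E; ring).
  apply rotation_letter_addZ.
Qed.

Lemma rotation_letter_at_int_l b g x y :
  0 < b -> 0 < g -> is_int x -> ~ is_int y ->
  rotation_letter (b / (b + g))
    ((b * IZR (Int_part x + Int_part y) + g * x - b * y) / (b + g)) = lb.
Proof.
  intros Hb Hg [n ->] Hy. pose proof (frac_part_pos y Hy). pose proof (frac_part_range y).
  set (al := b / (b + g)).
  assert (Hal : 0 < al < 1) by now apply ratio_range.
  replace ((b * IZR (Int_part (IZR n) + Int_part y) + g * IZR n - b * y) / (b + g))
    with (IZR n - al * frac_part y)
    by (unfold al, frac_part; rewrite plus_IZR, Int_part_IZR; field; lra).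
  unfold rotation_letter.
  rewrite (Int_part_unique (IZR n - al * frac_part y) (n - 1)) by (rewrite minus_IZR; nra).
  rewrite (Int_part_unique (IZR n - al * frac_part y + al) n) by nra.
  destruct Z.eq_dec; [lia | reflexivity].
Qed.

Lemma rotation_letter_at_int_r b g x y :
  0 < b -> 0 < g -> is_int y -> ~ is_int x ->
  rotation_letter (b / (b + g))
    ((b * IZR (Int_part x + Int_part y) + g * x - b * y) / (b + g)) = lc.
Proof.
  intros Hb Hg [n ->] Hx. pose proof (frac_part_pos x Hx). pose proof (frac_part_range x).
  set (c := g / (b + g)).
  assert (Hc : 0 < c < 1) by (unfold c; rewrite Rplus_comm; now apply ratio_range).
  replace ((b * IZR (Int_part x + Int_part (IZR n)) + g * x - b * IZR n) / (b + g))
    with (IZR (Int_part x) + c * frac_part x)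
    by (unfold c, frac_part; rewrite plus_IZR, Int_part_IZR; field; lra).
  replace (b / (b + g)) with (1 - c) by (unfold c; field; lra).
  unfold rotation_letter.
  rewrite (Int_part_unique (IZR (Int_part x) + c * frac_part x) (Int_part x)) by nra.
  rewrite (Int_part_unique (IZR (Int_part x) + c * frac_part x + (1 - c)) (Int_part x)) by nra.
  destruct Z.eq_dec; [reflexivity | lia].
Qed.

(** * Hitting times of the billiard line *)

Lemma R3_nonzero_coord (th : R3) : th <> (0, 0, 0) -> exists l, coord th l <> 0.
Proof.
  destruct th as [[a b] c]. intros H.
  destruct (Req_dec a 0), (Req_dec b 0), (Req_dec c 0); subst;
    first [now exfalso | now exists la | now exists lb | now exists lc].
Qed.

Lemma fold_Rmin_in (x : R) (xs : list R) : In (fold_right Rmin x xs) (x :: xs).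
Proof.
  induction xs as [|y xs IH]; [now left|]. cbn [fold_right].
  destruct (Rmin_case y (fold_right Rmin x xs) (fun z => z = y \/ z = fold_right Rmin x xs))
    as [-> | ->]; auto.
  - right. now left.
  - destruct IH as [E|Hin]; [now left | right; now right].
Qed.

Lemma fold_Rmin_le (x : R) (xs : list R) y : In y (x :: xs) -> fold_right Rmin x xs <= y.
Proof.
  induction xs as [|z xs IH]; simpl; intros Hy.
  - destruct Hy as [<-|[]]. lra.
  - destruct Hy as [<-|[<-|Hy]].
    + eapply Rle_trans; [apply Rmin_r | apply IH; now left].
    + apply Rmin_l.
    + eapply Rle_trans; [apply Rmin_r | apply IH; now right].
Qed.

Section Billiard.

Variables th m : R3.

Definition orient (x : R) : R := if Rle_dec 0 x then 1 else -1.

(* The coordinate along [l], with orientation reversed when the direction is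
   negative so that it increases with time; it is an integer exactly at [l]-hits. *)
Definition unfolded (l : letter) (t : R) : R :=
  orient (coord th l) * (coord m l + t * coord th l).

Lemma unfolded_affine l t : unfolded l t = unfolded l 0 + Rabs (coord th l) * t.
Proof.
  unfold unfolded, orient. destruct Rle_dec.
  - rewrite Rabs_pos_eq by lra. ring.
  - rewrite Rabs_left by lra. ring.
Qed.

Lemma hits_unfolded t l : hits th m t l <-> is_int (unfolded l t).
Proof.
  unfold hits, unfolded, orient. destruct Rle_dec.
  - now rewrite Rmult_1_l.
  - replace (-1 * (coord m l + t * coord th l)) with (- (coord m l + t * coord th l)) by ring.
    now rewrite is_int_opp.
Qed.

Lemma unfolded_lt l a b : coord th l <> 0 -> (unfolded l a < unfolded l b <-> a < b).
Proof.
  intros H. pose proof (Rabs_pos_lt _ H).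
  rewrite (unfolded_affine l a), (unfolded_affine l b). split; intros; nra.
Qed.

Lemma unfolded_le l a b : coord th l <> 0 -> (unfolded l a <= unfolded l b <-> a <= b).
Proof.
  intros H. pose proof (Rabs_pos_lt _ H).
  rewrite (unfolded_affine l a), (unfolded_affine l b). split; intros; nra.
Qed.

Definition hit_time (l : letter) (n : Z) : R := (IZR n - unfolded l 0) / Rabs (coord th l).

Lemma unfolded_hit_time l n : coord th l <> 0 -> unfolded l (hit_time l n) = IZR n.
Proof.
  intros H. pose proof (Rabs_pos_lt _ H).
  rewrite unfolded_affine. unfold hit_time. field. lra.
Qed.

Lemma hits_hit_time l n : coord th l <> 0 -> hits th m (hit_time l n) l.
Proof. intros H. apply hits_unfolded. rewrite unfolded_hit_time by exact H. now exists n. Qed.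

Lemma hit_time_between l a b n :
  coord th l <> 0 -> unfolded l a <= IZR n < unfolded l b ->
  a <= hit_time l n < b /\ hits th m (hit_time l n) l.
Proof.
  intros H [H1 H2]. rewrite <- (unfolded_hit_time l n H) in H1, H2.
  apply unfolded_le in H1; apply unfolded_lt in H2; auto. split; [lra | now apply hits_hit_time].
Qed.

Definition next_hit_of (l : letter) (s : R) : R := hit_time l (up (unfolded l s)).

Lemma next_hit_of_hits l s : coord th l <> 0 -> hits th m (next_hit_of l s) l.
Proof. apply hits_hit_time. Qed.

Lemma next_hit_of_gt l s : coord th l <> 0 -> s < next_hit_of l s.
Proof.
  intros H. apply (unfolded_lt l); [exact H|].
  unfold next_hit_of. rewrite unfolded_hit_time by exact H. apply archimed.
Qed.

Lemma next_hit_of_le l s t : coord th l <> 0 -> s < t -> hits th m t l -> next_hit_of l s <= t.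
Proof.
  intros H Hst Ht. apply hits_unfolded in Ht as [n Hn].
  apply (unfolded_le l); [exact H|]. unfold next_hit_of.
  rewrite unfolded_hit_time, Hn by exact H. apply IZR_le.
  apply (unfolded_lt l) in Hst; [|exact H]. rewrite Hn in Hst.
  destruct (archimed (unfolded l s)) as [_ Hup].
  assert (up (unfolded l s) < n + 1)%Z by (apply lt_IZR; rewrite plus_IZR; lra). lia.
Qed.

Definition moving_letters : list letter :=
  filter (fun l => if Req_EM_T (coord th l) 0 then false else true) (la :: lb :: lc :: nil).

Lemma in_moving_letters l : In l moving_letters <-> coord th l <> 0.
Proof.
  unfold moving_letters. rewrite filter_In.
  destruct Req_EM_T; split; try easy; intros _; split; [destruct l; simpl; auto | reflexivity].
Qed.

Definition next_hit (s : R) : R :=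
  match map (fun l => next_hit_of l s) moving_letters with
  | nil => s
  | x :: xs => fold_right Rmin x xs
  end.

Hypothesis th_nonzero : th <> (0, 0, 0).
Hypothesis m_boundary : on_cube_boundary m.
Hypothesis well_defined : billiard_well_defined th m.

Lemma static_letter_no_hit l t : coord th l = 0 -> ~ hits th m t l.
Proof.
  intros H0 Hh. destruct (R3_nonzero_coord th th_nonzero) as [l' Hl'].
  assert (Hll' : l <> l') by (intros ->; contradiction).
  apply (well_defined (- coord m l' / coord th l') l l' Hll').
  - unfold hits in *. rewrite H0, Rmult_0_r, Rplus_0_r in *. exact Hh.
  - exists 0%Z. field. exact Hl'.
Qed.

Lemma next_hit_spec s :
  (exists l, coord th l <> 0 /\ next_hit s = next_hit_of l s) /\
  (forall l, coord th l <> 0 -> next_hit s <= next_hit_of l s).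
Proof.
  destruct (R3_nonzero_coord th th_nonzero) as [l0 Hl0].
  unfold next_hit. destruct (map (fun l => next_hit_of l s) moving_letters) as [|x xs] eqn:E.
  - exfalso. apply in_moving_letters in Hl0.
    apply (in_map (fun l => next_hit_of l s)) in Hl0. now rewrite E in Hl0.
  - split.
    + pose proof (fold_Rmin_in x xs) as Hin. rewrite <- E in Hin.
      apply in_map_iff in Hin as [l [Hl Hin]]. apply in_moving_letters in Hin. eauto.
    + intros l Hl. apply fold_Rmin_le. rewrite <- E.
      apply (in_map (fun l => next_hit_of l s)). now apply in_moving_letters.
Qed.

Fixpoint hit_times (k : nat) : R :=
  match k with O => 0 | S k => next_hit (hit_times k) end.

Lemma hit_times_hits k : exists l, hits th m (hit_times k) l.
Proof.
  destruct k as [|k]; simpl.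
  - destruct m_boundary as [_ [l Hl]]. exists l. unfold hits. rewrite Rmult_0_l, Rplus_0_r.
    destruct Hl as [-> | ->]; [now exists 0%Z | now exists 1%Z].
  - destruct (next_hit_spec (hit_times k)) as [[l [Hl ->]] _].
    exists l. now apply next_hit_of_hits.
Qed.

Lemma hit_times_lt k : hit_times k < hit_times (S k).
Proof.
  simpl. destruct (next_hit_spec (hit_times k)) as [[l [Hl ->]] _]. now apply next_hit_of_gt.
Qed.

Lemma hit_times_nonneg k : 0 <= hit_times k.
Proof. induction k as [|k IH]; [simpl; lra|]. pose proof (hit_times_lt k). lra. Qed.

Lemma no_hit_between_hit_times k t l : hit_times k < t < hit_times (S k) -> ~ hits th m t l.
Proof.
  intros [H1 H2] Hh. destruct (Req_dec (coord th l) 0) as [H0|H0].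
  - exact (static_letter_no_hit l t H0 Hh).
  - simpl in H2. destruct (next_hit_spec (hit_times k)) as [_ Hmin].
    pose proof (Hmin l H0). pose proof (next_hit_of_le l _ t H0 H1 Hh). lra.
Qed.

Definition crossings_of (l : letter) (t : R) : Z :=
  if Req_EM_T (coord th l) 0 then 0%Z else Int_part (unfolded l t).

Definition crossings (t : R) : Z := (crossings_of la t + crossings_of lb t + crossings_of lc t)%Z.

Lemma crossings_of_le l s t : s <= t -> (crossings_of l s <= crossings_of l t)%Z.
Proof.
  intros H. unfold crossings_of. destruct Req_EM_T; [lia|].
  apply Int_part_le. now apply unfolded_le.
Qed.

Lemma crossings_of_next_hit_of l s :
  coord th l <> 0 -> (crossings_of l s + 1 <= crossings_of l (next_hit_of l s))%Z.
Proof.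
  intros H. unfold crossings_of, next_hit_of. destruct Req_EM_T; [contradiction|].
  rewrite unfolded_hit_time, Int_part_IZR by exact H. unfold Int_part. lia.
Qed.

Lemma crossings_le s t : s <= t -> (crossings s <= crossings t)%Z.
Proof.
  intros H. unfold crossings.
  pose proof (crossings_of_le la s t H). pose proof (crossings_of_le lb s t H).
  pose proof (crossings_of_le lc s t H). lia.
Qed.

Lemma crossings_hit_times k : (crossings 0 + Z.of_nat k <= crossings (hit_times k))%Z.
Proof.
  induction k as [|k IH]; [simpl; lia|].
  pose proof (Rlt_le _ _ (hit_times_lt k)) as Hle. simpl in *.
  destruct (next_hit_spec (hit_times k)) as [[l [Hl Hnext]] _]. rewrite Hnext in *.
  pose proof (crossings_of_next_hit_of l (hit_times k) Hl).
  unfold crossings in *.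
  pose proof (crossings_of_le la _ _ Hle). pose proof (crossings_of_le lb _ _ Hle).
  pose proof (crossings_of_le lc _ _ Hle). destruct l; lia.
Qed.

Lemma hit_times_unbounded t : exists K, t < hit_times K.
Proof.
  apply NNPP. intros Hbounded.
  set (K := S (Z.to_nat (crossings t - crossings 0))).
  assert (HK : hit_times K <= t) by (apply Rnot_lt_le; intros Hlt; apply Hbounded; eauto).
  pose proof (crossings_hit_times K). pose proof (crossings_le _ _ HK). unfold K in *. lia.
Qed.

Lemma hit_times_cover t l : 0 <= t -> hits th m t l -> exists k, hit_times k = t.
Proof.
  intros Ht Hh. destruct (hit_times_unbounded t) as [K HK].
  assert (Hbracket : exists k, hit_times k <= t < hit_times (S k)).
  { induction K as [|K IH]; [simpl in HK; lra|].
    destruct (Rlt_dec t (hit_times K)); [now apply IH | exists K; lra]. }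
  destruct Hbracket as [k [[Hlt|Heq] H2]]; [|now exists k].
  exfalso. exact (no_hit_between_hit_times k t l (conj Hlt H2) Hh).
Qed.

Lemma billiard_word_exists : exists u, is_billiard_word th m u.
Proof.
  destruct (choice _ hit_times_hits) as [u Hu].
  exists u, hit_times. repeat split.
  - exact hit_times_lt.
  - exact hit_times_nonneg.
  - exact Hu.
  - exact hit_times_cover.
Qed.

End Billiard.

Lemma billiard_word_spec th m :
  th <> (0, 0, 0) -> on_cube_boundary m -> billiard_well_defined th m ->
  is_billiard_word th m (billiard_word th m).
Proof.
  intros Hth Hm Hwd. unfold billiard_word. apply epsilon_spec. now apply billiard_word_exists.
Qed.

(** * The word delta_a(u) *)

Definition slope (th : R3) : R :=
  Rabs (coord th lb) / (Rabs (coord th lb) + Rabs (coord th lc)).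

Lemma slope_range th : coord th lb <> 0 -> coord th lc <> 0 -> 0 < slope th < 1.
Proof. intros Hb Hc. apply ratio_range; now apply Rabs_pos_lt. Qed.

Lemma slope_irrational_iff th :
  coord th lb <> 0 -> coord th lc <> 0 ->
  irrational (slope th) <-> Q_lin_indep (coord th lb) (coord th lc).
Proof.
  intros Hb Hc. unfold slope.
  rewrite <- Q_lin_indep_iff_irrational, Q_lin_indep_Rabs by now apply Rabs_pos_lt.
  reflexivity.
Qed.

Definition offset (th m : R3) : R :=
  slope th * (IZR (ceil (unfolded th m lb 0) + ceil (unfolded th m lc 0)) - 1)
  + (Rabs (coord th lc) * unfolded th m lb 0 - Rabs (coord th lb) * unfolded th m lc 0)
    / (Rabs (coord th lb) + Rabs (coord th lc)).

Section Coding.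

Variables (th m : R3) (T : nat -> R) (u : nat -> letter).
Hypothesis th_nonzero : th <> (0, 0, 0).
Hypothesis well_defined : billiard_well_defined th m.
Hypothesis enumeration :
  (forall k, T k < T (S k)) /\ (forall k, 0 <= T k) /\ (forall k, hits th m (T k) (u k)) /\
  (forall t l, 0 <= t -> hits th m t l -> exists k, T k = t).

Let T_step : forall k, T k < T (S k) := proj1 enumeration.
Let T_nonneg : forall k, 0 <= T k := proj1 (proj2 enumeration).
Let T_hits : forall k, hits th m (T k) (u k) := proj1 (proj2 (proj2 enumeration)).
Let T_cover : forall t l, 0 <= t -> hits th m t l -> exists k, T k = t :=
  proj2 (proj2 (proj2 enumeration)).

Lemma T_mono j k : (j <= k)%nat -> T j <= T k.
Proof. induction 1 as [|k _ IH]; [lra|]. pose proof (T_step k). lra. Qed.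

Lemma no_hit_before t l : 0 <= t < T 0 -> ~ hits th m t l.
Proof.
  intros [H1 H2] Hh. destruct (T_cover t l H1 Hh) as [k <-].
  pose proof (T_mono 0 k (Nat.le_0_l k)). lra.
Qed.

Lemma hit_in_step j t l : T j <= t < T (S j) -> hits th m t l -> t = T j.
Proof.
  intros [H1 H2] Hh. destruct (T_cover t l) as [k <-]; [pose proof (T_nonneg j); lra | exact Hh |].
  destruct (Nat.lt_trichotomy k j) as [Hlt|[->|Hgt]]; [exfalso | reflexivity | exfalso].
  - pose proof (T_mono (S k) j Hlt). pose proof (T_step k). lra.
  - pose proof (T_mono (S j) k Hgt). lra.
Qed.

Lemma letter_at_hit k l : hits th m (T k) l -> u k = l.
Proof.
  intros Hh. destruct (letter_eq_dec (u k) l) as [|Hne]; [assumption|].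
  exfalso. exact (well_defined (T k) (u k) l Hne (T_hits k) Hh).
Qed.

(* The [l]-letters among the first [j] ones are the integers met by [unfolded l] on [0, T j). *)
Lemma count_letter_ceil l j :
  coord th l <> 0 ->
  Z.of_nat (count_letter l u j) = (ceil (unfolded th m l (T j)) - ceil (unfolded th m l 0))%Z.
Proof.
  intros Hl. induction j as [|j IH]; cbn [count_letter].
  - rewrite (ceil_no_int_between (unfolded th m l 0)); [lia | now apply unfolded_le |].
    intros n Hn. destruct (hit_time_between th m l 0 (T 0) n Hl Hn) as [Ht Hh].
    exact (no_hit_before _ l Ht Hh).
  - rewrite Nat2Z.inj_add, IH.
    assert (Hlt : unfolded th m l (T j) < unfolded th m l (T (S j))) by now apply unfolded_lt.
    assert (Honly : forall n, unfolded th m l (T j) <= IZR n < unfolded th m l (T (S j)) ->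
                      hit_time th m l n = T j).
    { intros n Hn. destruct (hit_time_between th m l (T j) (T (S j)) n Hl Hn) as [Ht Hh].
      exact (hit_in_step j _ l Ht Hh). }
    destruct (letter_eq_dec (u j) l) as [Hul|Hul].
    + pose proof (T_hits j) as Hh. rewrite Hul in Hh. apply hits_unfolded in Hh as [n Hn].
      rewrite Hn in *. rewrite ceil_IZR, (ceil_one_int_between n (unfolded th m l (T (S j))));
        [simpl; lia | exact Hlt |].
      intros k Hk. apply eq_IZR. rewrite <- Hn, <- (Honly k Hk).
      now rewrite unfolded_hit_time.
    + rewrite (ceil_no_int_between (unfolded th m l (T j)) (unfolded th m l (T (S j))));
        [simpl; lia | lra |].
      intros n Hn. apply Hul, letter_at_hit. rewrite <- (Honly n Hn). now apply hits_hit_time.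
Qed.

Lemma erase_a_exists : coord th lb <> 0 -> exists w, erase_a u w.
Proof.
  intros Hb. apply erase_a_of_unbounded. intros K.
  set (n := (ceil (unfolded th m lb 0) + Z.of_nat K)%Z).
  assert (Ht : 0 <= hit_time th m lb n).
  { apply (unfolded_le th m lb); [exact Hb|]. rewrite unfolded_hit_time by exact Hb.
    pose proof (ceil_bounds (unfolded th m lb 0)). pose proof (pos_INR K).
    unfold n. rewrite plus_IZR, <- INR_IZR_INZ. lra. }
  destruct (T_cover _ lb Ht (hits_hit_time th m lb n Hb)) as [j Hj]. exists j.
  pose proof (count_letter_ceil lb j Hb) as Hcount.
  rewrite Hj, unfolded_hit_time, ceil_IZR in Hcount by exact Hb.
  rewrite count_nona_split. unfold n in Hcount. lia.
Qed.

Lemma erase_a_avoids_static w l : coord th l = 0 -> erase_a u w -> forall k, w k <> l.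
Proof.
  intros Hl Hw k E. destruct (Hw k) as [j [_ [_ Hwk]]].
  apply (static_letter_no_hit th m th_nonzero well_defined l (T j) Hl).
  rewrite <- E, Hwk. apply T_hits.
Qed.

Lemma erase_a_rotation w :
  coord th lb <> 0 -> coord th lc <> 0 -> erase_a u w ->
  forall k, w k = rotation_letter (slope th) (offset th m + INR k * slope th).
Proof.
  intros Hb Hc Hw k. destruct (Hw k) as [j [Hja [Hjk ->]]].
  set (b := Rabs (coord th lb)). set (g := Rabs (coord th lc)).
  assert (Hb' : 0 < b) by now apply Rabs_pos_lt.
  assert (Hg' : 0 < g) by now apply Rabs_pos_lt.
  pose proof (count_letter_ceil lb j Hb) as Hcount_b.
  pose proof (count_letter_ceil lc j Hc) as Hcount_c.
  rewrite count_nona_split in Hjk.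
  set (x := unfolded th m lb (T j)) in *. set (y := unfolded th m lc (T j)) in *.
  assert (Hpoint : offset th m + INR k * slope th
                   = (b * IZR (ceil x + ceil y - 1) + g * x - b * y) / (b + g)).
  { assert (Hk : Z.of_nat k = (ceil x + ceil y - ceil (unfolded th m lb 0)
                                - ceil (unfolded th m lc 0))%Z) by lia.
    assert (Hinv : g * x = b * y + (g * unfolded th m lb 0 - b * unfolded th m lc 0)).
    { unfold x, y, b, g. rewrite (unfolded_affine th m lb (T j)), (unfolded_affine th m lc (T j)).
      ring. }
    unfold offset, slope. fold b g. rewrite INR_IZR_INZ, Hk, Hinv, !minus_IZR, !plus_IZR.
    field. lra. }
  assert (Hxy : ~ (is_int x /\ is_int y)).
  { intros [Hx Hy]. apply hits_unfolded in Hx, Hy.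
    exact (well_defined (T j) lb lc ltac:(discriminate) Hx Hy). }
  pose proof (T_hits j) as Hh. rewrite Hpoint. unfold slope. fold b g. symmetry.
  destruct (u j); [contradiction | |].
  - apply hits_unfolded in Hh. fold x in Hh.
    rewrite ceil_add_int_not_int by tauto. now apply rotation_letter_at_int_l; tauto.
  - apply hits_unfolded in Hh. fold y in Hh.
    rewrite (Z.add_comm (ceil x)), ceil_add_int_not_int, Z.add_comm by tauto.
    now apply rotation_letter_at_int_r; tauto.
Qed.

Lemma erase_a_periodic w :
  ~ Q_lin_indep (coord th lb) (coord th lc) -> erase_a u w ->
  exists J, (1 <= J)%nat /\ forall k, w (k + J)%nat = w k.
Proof.
  intros Hdep Hw.
  assert (Hconst : forall l, (forall k, w k = l) ->
            exists J, (1 <= J)%nat /\ forall k, w (k + J)%nat = w k).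
  { intros l Hl. exists 1%nat. split; [lia | intros k; now rewrite !Hl]. }
  destruct (Req_dec (coord th lb) 0) as [Hb|Hb]; [|destruct (Req_dec (coord th lc) 0) as [Hc|Hc]].
  - apply (Hconst lc). intros k. pose proof (erase_a_not_a u w k Hw).
    pose proof (erase_a_avoids_static w lb Hb Hw k). destruct (w k); easy.
  - apply (Hconst lb). intros k. pose proof (erase_a_not_a u w k Hw).
    pose proof (erase_a_avoids_static w lc Hc Hw k). destruct (w k); easy.
  - apply (rotation_word_periodic (slope th) (offset th m)).
    + now rewrite slope_irrational_iff.
    + now apply erase_a_rotation.
Qed.

End Coding.

Theorem corollary1 (theta m : R3) :
  theta <> (0, 0, 0) ->
  on_cube_boundary m ->
  billiard_well_defined theta m ->
  (delta_a_sturmian (billiard_word theta m) <->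
   Q_lin_indep (coord theta lb) (coord theta lc)).
Proof.
  intros Hth Hm Hwd.
  destruct (billiard_word_spec theta m Hth Hm Hwd) as [T HT].
  split.
  - intros [w [Hw Hsturm]]. apply NNPP. intros Hdep.
    destruct (erase_a_periodic theta m T _ Hth Hwd HT w Hdep Hw) as [J [HJ Hper]].
    exact (periodic_not_sturmian w J HJ Hper Hsturm).
  - intros Hind. destruct (Q_lin_indep_nonzero _ _ Hind) as [Hb Hc].
    destruct (erase_a_exists theta m T _ Hwd HT Hb) as [w Hw].
    exists w. split; [exact Hw|].
    apply (rotation_sturmian (slope theta)) with (rho := offset theta m).
    + now apply slope_range.
    + now apply slope_irrational_iff.
    + now apply (erase_a_rotation theta m T _ Hwd HT).
Qed.
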